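(* Let $n\geqslant 3$, let $S$ be a caterpillar species tree with $n$ leaves and let $G$ be a caterpillar gene tree on the same label set that differs from $S$ by a nearest-neighbor-interchange (NNI) move. Then (i) the roadblock set $B_{G,S}$ consists of a single point $(i,i)$ for some $i$ with $1\leqslant i\leqslant n-2$; and (ii) the number of coalescent histories for $(G,S)$ is $C_{n-1}-C_iC_{n-1-i}$, where $C_m=\frac{1}{m+1}\binom{2m}{m}$.
   Context: All trees are binary, rooted, leaf-labeled. A caterpillar tree with $n$ leaves is one in which some internal node is descended from all other internal nodes. Its canonical label vector $(x_1,\dots,x_n)$ has $x_1,x_2$ the labels of the two leaves of the cherry (unique internal node with two descendant leaves) and, for $3\leqslant i\leqslant n$, $x_i$ the label of the leaf separated from the root by $n-i+1$ edges; vectors differing only by swapping $x_1,x_2$ describe the same tree. $G$ and $S$ differ by an NNI move if the canonical vector of $S$ is obtained from that of $G$ by exchanging the labels in positions $\{k,k+1\}$ for some $2\leqslant k\leqslant n-1$, or in positions $\{1,3\}$. Internal nodes are numbered $1,\dots,n-1$ from cherry to root; internal edge $i$ is the edge above node $i$, with an extra edge $n-1$ above the root. A coalescent history for $(G,S)$ is a map $h$ from internal nodes of $G$ to internal edges of $S$ such that (1) every label of a leaf below node $v$ of $G$ labels a leaf of $S$ below edge $h(v)$, and (2) if $v_2$ is descended from $v_1$ in $G$ then $h(v_2)$ is descended from $h(v_1)$ (objects are descended from themselves). With $\mathbf g,\mathbf s$ the canonical vectors of $G,S$, $\sigma(x)$ the index of $x$ in $\mathbf s$ and $F(j)=\max\{\sigma(g_1),\dots,\sigma(g_{j+1})\}-1$,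 the roadblock set is $B_{G,S}=\{(i,j)\in\mathbb Z^2:1\leqslant j\leqslant i\leqslant n-1,\ i<F(j)\}$. *)

From mathcomp Require Import all_boot all_order all_algebra.
Set Implicit Arguments. Unset Strict Implicit. Unset Printing Implicit Defensive.
Import GRing.Theory Num.Theory.

(* A caterpillar tree with n leaves is represented by (a representative of)
   its canonical label vector x = (x_1,...,x_n), a duplicate-free seq of
   natural-number labels of size n.  Positions are 1-indexed via [lab]. *)

Definition lab (x : seq nat) (i : nat) : nat := nth 0 x i.-1.

Definition tr (a b i : nat) : nat := if i == a then b else if i == b then a else i.
Definition swap_pos (a b : nat) (x : seq nat) : seq nat :=
  mkseq (fun i => lab x (tr a b i.+1)) (size x).

Definition nni (n : nat) (g s : seq nat) : Prop :=
  (exists k, 2 <= k <= n.-1 /\ s = swap_pos k k.+1 g) \/ s = swap_pos 1 3 g.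

(* Internal node k (1 <= k <= n-1) of a caterpillar with vector x has below
   it exactly the leaves labelled x_1, ..., x_{k+1}; internal edge k (the edge
   above node k, edge n-1 being the extra edge above the root) has the same
   leaves below it. *)
Definition clade (x : seq nat) (k : nat) : seq nat := take k.+1 x.

(* In a caterpillar, node k is the parent of node k-1, so node a is
   descended from node b (objects are descended from themselves) iff a <= b;
   likewise for internal edges. *)
Definition desc_node (a b : nat) : bool := a <= b.
Definition desc_edge (a b : nat) : bool := a <= b.

(* Coalescent histories: maps from internal nodes 1..n-1 of G to internal
   edges 1..n-1 of S; an ordinal v : 'I_(n-1) stands for node/edge v+1. *)
Definition is_history (n : nat) (g s : seq nat) (h : {ffun 'I_n.-1 -> 'I_n.-1}) : bool :=
  [forall v : 'I_n.-1,
      all (fun x => x \in clade s (h v).+1) (clade g v.+1)] &&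
  [forall v1 : 'I_n.-1, forall v2 : 'I_n.-1,
      desc_node v2.+1 v1.+1 ==> desc_edge (h v2).+1 (h v1).+1].

Definition num_histories (n : nat) (g s : seq nat) : nat :=
  #|[set h : {ffun 'I_n.-1 -> 'I_n.-1} | @is_history n g s h]|.

Definition sigma (s : seq nat) (x : nat) : nat := (index x s).+1.
Definition Ffun (g s : seq nat) (j : nat) : nat :=
  (\max_(x <- take j.+1 g) sigma s x) - 1.

Definition roadblock (n : nat) (g s : seq nat) (p : nat * nat) : bool :=
  [&& 1 <= p.2, p.2 <= p.1, p.1 <= n.-1 & p.1 < Ffun g s p.2].

Definition catalan (m : nat) : rat := ('C(2 * m, m))%:R / (m.+1)%:R.

(* A coalescent history sends the nodes of G monotonically to edges of S, and
   node j may be sent to edge e exactly when F(j) <= e.  Histories are thus the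
   nondecreasing sequences h_1 <= ... <= h_(n-1) <= n-1 with F(j) <= h_j; for
   F(j) = j these ballot sequences are counted by C_(n-1).  An NNI move
   transposes two adjacent positions of the label vector (or positions 1 and 3),
   and this changes F at a single node i, where F(i) = i+1: that is the unique
   roadblock (i,i).  The histories are then the ballot sequences with h_i <> i,
   and those with h_i = i split into a ballot sequence of length i and one of
   length n-1-i, whence C_(n-1) - C_i C_(n-1-i). *)

From mathcomp Require Import all_boot all_order all_algebra zify.
Set Implicit Arguments. Unset Strict Implicit. Unset Printing Implicit Defensive.
Import GRing.Theory Num.Theory.

Definition floored_mono (lb : nat -> nat) L M (b : nat) (h : {ffun 'I_L -> 'I_M}) :=
  [forall i : 'I_L, lb i <= h i <= b] &&
  [forall i : 'I_L, forall j : 'I_L, (i <= j) ==> (h i <= h j)].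

Fixpoint nmono (lb : nat -> nat) (L b : nat) : nat :=
  if L is L'.+1 then \sum_(lb L' <= a < b.+1) nmono lb L' a else 1.

Lemma eq_nmono lb1 lb2 L b :
  {in gtn L, lb1 =1 lb2} -> nmono lb1 L b = nmono lb2 L b.
Proof.
elim: L b => [|L IH] b //= eq_lb.
rewrite eq_lb ?inE //; apply: eq_bigr => a _.
by apply: IH => v /ltnW v_lt; apply: eq_lb.
Qed.

Section CardFlooredMono.
Variables (lb : nat -> nat) (M : nat).

Definition ext_last L (a : 'I_M) (f : {ffun 'I_L -> 'I_M}) : {ffun 'I_L.+1 -> 'I_M} :=
  [ffun i => if unlift ord_max i is Some j then f j else a].

Lemma ext_last_lift L a (f : {ffun 'I_L -> 'I_M}) j : ext_last a f (lift ord_max j) = f j.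
Proof. by rewrite ffunE liftK. Qed.

Lemma ext_last_max L a (f : {ffun 'I_L -> 'I_M}) : ext_last a f ord_max = a.
Proof. by rewrite ffunE unlift_none. Qed.

Lemma ext_last_inj L a : injective (@ext_last L a).
Proof.
by move=> f1 f2 eq_f; apply/ffunP => j; rewrite -(ext_last_lift a f1) eq_f ext_last_lift.
Qed.

Lemma ext_lastE L (h : {ffun 'I_L.+1 -> 'I_M}) :
  h = ext_last (h ord_max) [ffun j => h (lift ord_max j)].
Proof.
apply/ffunP => i; rewrite ffunE.
by case: (unliftP ord_max i) => [j ->|->] //; rewrite ffunE.
Qed.

Lemma floored_mono_ext L b a (f : {ffun 'I_L -> 'I_M}) :
  floored_mono lb b (ext_last a f) = [&& floored_mono lb a f, lb L <= a & a <= b].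
Proof.
rewrite /floored_mono; apply/andP/and3P.
- case=> /forallP bnd /forallP mono.
  have := bnd ord_max; rewrite ext_last_max => /andP[-> ->]; split=> //.
  apply/andP; split; apply/forallP => i.
    have := bnd (lift ord_max i); rewrite ext_last_lift lift_max => /andP[-> _].
    have := forallP (mono (lift ord_max i)) ord_max.
    by rewrite ext_last_lift ext_last_max lift_max /= (ltnW (ltn_ord i)).
  apply/forallP => j; have := forallP (mono (lift ord_max i)) (lift ord_max j).
  by rewrite !ext_last_lift !lift_max.
- case=> /andP[/forallP bnd /forallP mono] lb_a a_b.
  split; apply/forallP => i.
    case: (unliftP ord_max i) => [j ->|->]; last by rewrite ext_last_max lb_a a_b.
    by rewrite ext_last_lift lift_max; case/andP: (bnd j) => -> /leq_trans->.
  apply/forallP => i'.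
  case: (unliftP ord_max i) => [j ->|->]; case: (unliftP ord_max i') => [j' ->|->];
    rewrite ?ext_last_lift ?ext_last_max ?lift_max //=.
  + exact: (forallP (mono j)).
  + by apply/implyP => _; case/andP: (bnd j).
  + by rewrite leqNgt ltn_ord.
  + by rewrite !leqnn.
Qed.

Lemma card_floored_mono_last L b (a : 'I_M) :
  #|[pred h : {ffun 'I_L.+1 -> 'I_M} | floored_mono lb b h && (h ord_max == a)]| =
  if lb L <= a <= b then #|[set f : {ffun 'I_L -> 'I_M} | floored_mono lb a f]| else 0.
Proof.
case: ifP => a_ok.
  rewrite -(card_imset _ (@ext_last_inj L a)); apply: eq_card => h; rewrite inE.
  apply/andP/imsetP => [[mono_h /eqP h_a] | [f]].
    exists [ffun j => h (lift ord_max j)]; last by rewrite {1}(ext_lastE h) h_a.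
    by move: mono_h; rewrite {1}(ext_lastE h) h_a floored_mono_ext inE => /andP[].
  by rewrite inE => mono_f ->; rewrite floored_mono_ext ext_last_max mono_f a_ok.
apply: eq_card0 => h; rewrite inE; apply/andP => -[].
rewrite {1}(ext_lastE h) floored_mono_ext => /and3P[_ lb_h h_b] /eqP h_a.
by rewrite -h_a lb_h h_b in a_ok.
Qed.

Lemma card_floored_mono L b : b < M ->
  #|[set h : {ffun 'I_L -> 'I_M} | floored_mono lb b h]| = nmono lb L b.
Proof.
elim: L b => [|L IH] b b_lt.
  rewrite (_ : [set h | _] = setT) ?cardsT ?card_ffun ?card_ord //.
  by apply/setP => h; rewrite !inE; apply/andP; split; apply/forallP => -[].
rewrite -sum1_card (partition_big (fun h : {ffun 'I_L.+1 -> 'I_M} => h ord_max) predT) //=.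
rewrite big_geq_mkord (big_ord_widen_cond M) // [RHS]big_mkcond; apply: eq_bigr => a _.
rewrite (eq_bigl [pred h | floored_mono lb b h & h ord_max == a]) => [|h]; last by rewrite /= inE.
rewrite sum1_card ltnS card_floored_mono_last; case: ifP => // /andP[_ a_b].
by apply: IH; apply: leq_ltn_trans b_lt.
Qed.
End CardFlooredMono.

Definition nballot := nmono id.

Lemma nballot_small L b : b < L -> nballot L.+1 b = 0.
Proof. by move=> b_lt; rewrite /nballot /= big_geq. Qed.

Lemma nballotS L b : L <= b.+1 -> nballot L.+1 b.+1 = nballot L.+1 b + nballot L b.+1.
Proof. by move=> L_le; rewrite /nballot /= big_nat_recr. Qed.

Lemma nballot_diag L : nballot L L = nballot L.+1 L.
Proof. by rewrite /nballot /= big_nat1. Qed.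

Lemma nballot_binomial L b : L <= b.+1 ->
  nballot L.+1 b + 'C(L + b + 2, L) = 'C(L + b + 2, L.+1).
Proof.
elim: L b => [|L IH] b.
  by rewrite /nballot /= sum_nat_const_nat muln1 bin0 bin1; lia.
rewrite ltnS => /subnKC <-; elim: (b - L) => [|c IHc].
  rewrite addn0 nballot_small // add0n -[RHS]bin_sub; last by lia.
  by congr 'C(_, _); lia.
rewrite addnS nballotS; last by lia.
have := IH (L + c).+1; move: IHc.
have -> : L.+1 + (L + c) + 2 = L + L + c + 3 by lia.
have -> : L + (L + c).+1 + 2 = L + L + c + 3 by lia.
have -> : L.+1 + (L + c).+1 + 2 = (L + L + c + 3).+1 by lia.
by move: (L + L + c + 3) => N; rewrite (binS N L) (binS N L.+1); lia.
Qed.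

Lemma nballot_catalan L : ((nballot L.+1 L)%:R = catalan L.+1 :> rat)%R.
Proof.
have ballot := nballot_binomial (leqnSn L).
have pascal := mul_bin_left (L + L + 2) L.
rewrite (_ : L + L + 2 - L = L.+2) in pascal; last by lia.
rewrite /catalan (_ : 2 * L.+1 = L + L + 2); last by lia.
have -> : 'C(L + L + 2, L.+1) = nballot L.+1 L * L.+2 by nia.
by rewrite natrM mulfK ?pnatr_eq0.
Qed.

Definition raise (i v : nat) : nat := if v == i then v.+1 else v.

(* Raising the floor at [i] discards the sequences with [h i = i]; these split
   into a ballot sequence of length [i] bounded by [i] and, shifted down by
   [i.+1], an arbitrary ballot sequence for the remaining positions. *)
Lemma nmono_raise i l b :
  nmono (raise i) (l + i.+1) (b + i.+1) + nballot i i * nballot l b =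
  nballot (l + i.+1) (b + i.+1).
Proof.
elim: l b => [|l IH] b /=.
  rewrite muln1 add0n {2}/nballot /= {1}/raise eqxx [RHS]big_ltn 1?addnC; last by lia.
  congr (_ + _); apply: eq_bigr => a _; apply: eq_nmono => v.
  by rewrite inE /raise; case: eqP => // ->; rewrite ltnn.
have -> : raise i (l + i.+1) = l + i.+1 by rewrite /raise; case: eqP => //; lia.
rewrite addSn -addSn big_addn addnK {2 3}/nballot /= -addSn big_addn addnK big_distrr -big_split.
by apply: eq_bigr => a _; apply: IH.
Qed.

Lemma trK a b : involutive (tr a b).
Proof.
by move=> i; rewrite /tr; case: (i =P a); case: (i =P b) => /= *; repeat case: eqP; lia.
Qed.

Lemma bigmax_tr a b j : 0 < a < b ->
  \max_(0 <= m < j) tr a b m.+1 = if a <= j < b then b else j.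
Proof.
move=> ab; apply/eqP; rewrite eqn_leq; apply/andP; split.
  apply/bigmax_leqP_seq => m; rewrite mem_index_iota => m_lt _.
  by rewrite /tr; repeat case: eqP => ?; case: ifP => ?; lia.
case: j => [|j]; first by case: ifP => //; lia.
pose w := if a <= j.+1 <= b then a.-1 else j.
apply: leq_trans (leq_bigmax_seq w _ isT); last by rewrite mem_index_iota /w; case: ifP; lia.
rewrite /w /tr; have [w_in | ] := boolP (a <= j.+1 <= b).
  by rewrite (prednK (n := a)) ?eqxx; [case: ifP; lia | lia].
rewrite negb_and -!ltnNge => /orP w_out.
have ja : j.+1 != a by apply/eqP; lia.
have jb : j.+1 != b by apply/eqP; lia.
by rewrite (negbTE ja) (negbTE jb); case: ifP; lia.
Qed.

Section SwapPos.
Variables (g : seq nat) (a b : nat).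
Hypotheses (a_in : 0 < a <= size g) (b_in : 0 < b <= size g).

Lemma tr_in i : 0 < i <= size g -> 0 < tr a b i <= size g.
Proof. by rewrite /tr; repeat case: eqP; lia. Qed.

Lemma nth_swap_pos m : m < size g ->
  nth 0 (swap_pos a b g) m = nth 0 g (tr a b m.+1).-1.
Proof. by move=> m_lt; rewrite nth_mkseq. Qed.

Hypothesis g_uniq : uniq g.

Lemma swap_pos_uniq : uniq (swap_pos a b g).
Proof.
rewrite /swap_pos /mkseq map_inj_in_uniq ?iota_uniq // => m1 m2.
rewrite !mem_iota !add0n /lab => m1_lt m2_lt /eqP.
have /andP[t1_pos t1_le] : 0 < tr a b m1.+1 <= size g by apply: tr_in; lia.
have /andP[t2_pos t2_le] : 0 < tr a b m2.+1 <= size g by apply: tr_in; lia.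
rewrite nth_uniq ?prednK //.
by move=> /eqP/(congr1 succn); rewrite !prednK // => /(can_inj (trK a b)) [].
Qed.

Lemma index_swap_pos m : m < size g ->
  index (nth 0 g m) (swap_pos a b g) = (tr a b m.+1).-1.
Proof.
move=> m_lt; have /andP[t_pos t_le] : 0 < tr a b m.+1 <= size g by apply: tr_in; lia.
have -> : nth 0 g m = nth 0 (swap_pos a b g) (tr a b m.+1).-1.
  by rewrite nth_swap_pos ?prednK ?trK //; lia.
by rewrite index_uniq ?size_mkseq ?swap_pos_uniq //; lia.
Qed.

Lemma Ffun_swap_pos j : a < b -> j < size g ->
  Ffun g (swap_pos a b g) j = if a <= j.+1 < b then b.-1 else j.
Proof.
move=> ab j_lt; rewrite /Ffun -(map_nth_iota0 0 j_lt) big_map.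
rewrite (eq_big_seq (fun m => tr a b m.+1)) => [|m]; last first.
  rewrite mem_iota => m_lt.
  have /andP[t_pos _] : 0 < tr a b m.+1 <= size g by apply: tr_in; lia.
  by rewrite /sigma index_swap_pos ?prednK //; lia.
rewrite -[iota 0 j.+1]/(index_iota 0 j.+1) bigmax_tr; last by lia.
by case: ifP; lia.
Qed.

End SwapPos.

Lemma all_clade_Ffun (g s : seq nat) v e : {subset g <= s} ->
  all (fun x => x \in clade s e) (clade g v) = (Ffun g s v <= e).
Proof.
move=> g_s; rewrite /Ffun leq_subLR add1n.
apply/allP/bigmax_leqP_seq => [clade_sub x x_g _ | Ffun_le x x_g].
  by have := clade_sub x x_g; rewrite /clade in_take // g_s // (mem_take x_g).
by have := Ffun_le x x_g isT; rewrite /clade in_take // g_s // (mem_take x_g).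
Qed.

Lemma num_historiesE n (g s : seq nat) : 1 < n -> {subset g <= s} ->
  num_histories n g s = nmono (fun v => (Ffun g s v.+1).-1) n.-1 n.-2.
Proof.
move=> n_gt1 g_s; rewrite /num_histories -(@card_floored_mono _ n.-1); last by lia.
apply: eq_card => h; rewrite !inE /is_history /floored_mono; congr andb.
  apply: eq_forallb => v; have h_le : h v <= n.-2 by have := ltn_ord (h v); lia.
  by rewrite all_clade_Ffun // h_le andbT -[(Ffun _ _ _).-1]subn1 leq_subLR add1n.
apply/forallP/forallP => mono i; apply/forallP => j;
  by have := forallP (mono j) i; rewrite /desc_node /desc_edge !ltnS.
Qed.

Lemma Ffun_nni n (g s : seq nat) : 2 < n -> uniq g -> size g = n -> nni n g s ->
  exists2 i, 0 < i < n.-1 & forall j, 0 < j < n -> Ffun g s j = raise i j.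
Proof.
move=> n_gt2 g_uniq g_size [[k [k_range ->]] | ->].
  exists k.-1; first by lia.
  move=> j j_range; rewrite Ffun_swap_pos /raise; try lia.
  by case: ifP; case: eqP; lia.
exists 1; first by lia.
move=> j j_range; rewrite Ffun_swap_pos /raise; try lia.
by case: ifP; case: eqP; lia.
Qed.

Lemma roadblock_raise n (g s : seq nat) i : 0 < i < n ->
  (forall j, 0 < j < n -> Ffun g s j = raise i j) ->
  forall p, roadblock n g s p <-> p = (i, i).
Proof.
move=> i_range Ffun_i [p1 p2]; rewrite /roadblock /=; split.
  case/and4P => p2_pos p2_le_p1 p1_le; rewrite Ffun_i /raise; last by lia.
  case: eqP => [p2_i | _] p1_lt; first by rewrite p2_i; congr pair; lia.
  by rewrite ltnNge p2_le_p1 in p1_lt.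
by case=> -> ->; rewrite Ffun_i /raise ?eqxx; lia.
Qed.

Lemma nmono_raise_catalan i l :
  ((nmono (raise i) (l + i).+2 (l + i).+1)%:R =
   catalan (l + i).+2 - catalan i.+1 * catalan l.+1 :> rat)%R.
Proof.
have := nmono_raise i l.+1 l; rewrite nballot_diag addSn !addnS => decomp.
by rewrite -!nballot_catalan -decomp natrD natrM addrK.
Qed.

Local Open Scope ring_scope.

Theorem proposition5 (n : nat) (g s : seq nat) :
  (3 <= n)%N -> uniq g -> size g = n -> perm_eq s g -> nni n g s ->
  exists i : nat,
    [/\ (1 <= i <= n - 2)%N,
        (forall p : nat * nat, roadblock n g s p <-> p = (i, i)) &
        (num_histories n g s)%:R = catalan n.-1 - catalan i * catalan (n.-1 - i)%N :> rat].
Proof.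
move=> n_ge3 g_uniq g_size s_perm g_s.
have [[|i] i_range Ffun_i] := Ffun_nni n_ge3 g_uniq g_size g_s; first by [].
exists i.+1; split; first by lia.
  by apply: roadblock_raise Ffun_i; lia.
have s_sub : {subset g <= s} by move=> x; rewrite (perm_mem s_perm).
rewrite (num_historiesE _ s_sub) ?(@eq_nmono _ (raise i)) => [|v|]; last by lia.
  have [l n_eq] : exists l, n = (l + i).+3 by exists (n - i - 3)%N; lia.
  by rewrite n_eq /= (_ : (l + i).+2 - i.+1 = l.+1)%N ?nmono_raise_catalan //; lia.
by rewrite inE => v_lt; rewrite Ffun_i ?/raise ?eqSS; [case: eqP | lia].
Qed.
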